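(* Let $\boldsymbol{m}=(m_1,m_2)\in\mathbb{N}^2$ and $g=\gcd(m_1,m_2)$. For every $l\in\{0,\dots,4m_1m_2/g-1\}$ and $\rho\in\{0,\dots,2g-1\}$ there exist $\boldsymbol{i}\in\mathrm{I}^{(\boldsymbol{m})}$ and $u,v\in\{-1,1\}$ with \[ i_1\equiv u\big(vl+(1-v)m_1\big)\pmod{4m_1},\qquad i_2\equiv l-2\rho-(1-v)m_2\pmod{4m_2}. \] The index $\boldsymbol{i}$ is uniquely determined by $(l,\rho)$ through these congruences, and the resulting map $(l,\rho)\mapsto\boldsymbol{i}(l,\rho)$ from $\{0,\dots,4m_1m_2/g-1\}\times\{0,\dots,2g-1\}$ to $\mathrm{I}^{(\boldsymbol{m})}$ is surjective. Moreover $\boldsymbol{i}(l,\rho)\in\mathrm{I}^{(\boldsymbol{m})}_0$ if and only if $l$ is even, and $\boldsymbol{i}(l,\rho)\in\mathrm{I}^{(\boldsymbol{m})}_1$ if and only if $l$ is odd. With the additional convention that $u=1$ if $l\equiv0\pmod{4m_1}$ and $u=-1$ if $l\equiv 2m_1\pmod{4m_1}$, the numbers $u,v$ are uniquely determined by the two congruences, and for every $\boldsymbol{i}\in\mathrm{I}^{(\boldsymbol{m})}$ \[\#\{(l,\rho):\ \boldsymbol{i}(l,\rho)=\boldsymbol{i}\}=\begin{cases}4,& 0<i_1\le m_1,\\ 2,& i_1=0.\end{cases}\]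
   Context: Nodal index set: $\mathrm{I}^{(\boldsymbol{m})}=\{(i_1,i_2)\in\mathbb{Z}^2:\ 0\le i_1\le m_1,\ -2m_2<i_2\le 2m_2,\ i_2\le0\text{ if }i_1=m_1,\ i_1+i_2\text{ even}\}$, with subsets $\mathrm{I}^{(\boldsymbol{m})}_0=\{\boldsymbol{i}\in\mathrm{I}^{(\boldsymbol{m})}: i_1,i_2\text{ even}\}$ and $\mathrm{I}^{(\boldsymbol{m})}_1=\{\boldsymbol{i}\in\mathrm{I}^{(\boldsymbol{m})}: i_1,i_2\text{ odd}\}$. *)

From HB Require Import structures.
From mathcomp Require Import all_boot all_order all_algebra.
Set Implicit Arguments. Unset Strict Implicit. Unset Printing Implicit Defensive.
Import Order.TTheory GRing.Theory Num.Theory.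
Local Open Scope ring_scope.

Definition inI (m1 m2 : nat) (i : int * int) : bool :=
  [&& 0 <= i.1, i.1 <= m1%:Z, - (2 * m2%:Z) < i.2, i.2 <= 2 * m2%:Z,
      (i.1 == m1%:Z) ==> (i.2 <= 0) & (2 %| i.1 + i.2)%Z].

Definition inI0 (m1 m2 : nat) (i : int * int) : bool :=
  [&& inI m1 m2 i, (2 %| i.1)%Z & (2 %| i.2)%Z].
Definition inI1 (m1 m2 : nat) (i : int * int) : bool :=
  [&& inI m1 m2 i, ~~ (2 %| i.1)%Z & ~~ (2 %| i.2)%Z].

Definition cong (m1 m2 l rho : nat) (i : int * int) (u v : int) : bool :=
  ((i.1 == u * (v * l%:Z + (1 - v) * m1%:Z) %[mod (4 * m1)%:Z])%Z) &&
  ((i.2 == l%:Z - 2 * rho%:Z - (1 - v) * m2%:Z %[mod (4 * m2)%:Z])%Z).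

Definition signs : seq int := [:: 1; -1].

Definition corr (m1 m2 l rho : nat) (i : int * int) : bool :=
  inI m1 m2 i &&
  has (fun u => has (fun v => cong m1 m2 l rho i u v) signs) signs.

Definition uconv (m1 l : nat) (u : int) : Prop :=
  ((l %% (4 * m1) == 0)%N -> u = 1) /\ ((l %% (4 * m1) == 2 * m1)%N -> u = -1).

(* Multiplying the first congruence by [v u] and using [u^2 = v^2 = 1] solves both for
   [(l, rho)]: [l = v u i1 + (1 - v) m1 (mod 4 m1)] and
   [l - 2 rho = i2 + (1 - v) m2 (mod 4 m2)].  Since [gcd (4 m1, 4 m2) = 4 g] and
   [lcm (4 m1, 4 m2) = 4 m1 m2 / g], the Chinese remainder theorem gives, for fixed
   [i, u, v] with [i1 + i2] even, exactly one [(l, rho)] in range: [rho] is determined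
   modulo [2 g], then [l] modulo the lcm.  Conversely, for fixed [(l, rho)], [i1] is [l]
   folded into [[0, m1]] up to sign modulo [2 m1], and [i2] is the representative in
   [(-2 m2, 2 m2]], the sign [v] being flipped on the edge [i1 = m1] to keep [i2 <= 0].
   Different sign pairs [(u, v)] give different [(l, rho)], except that [u] is
   irrelevant when [i1 = 0]; this yields the fibre sizes [4] and [2]. *)

From HB Require Import structures.
From mathcomp Require Import all_boot all_order all_algebra.
From mathcomp Require Import zify.
Set Implicit Arguments.
Unset Strict Implicit.
Unset Printing Implicit Defensive.

Import Order.TTheory GRing.Theory Num.Theory.
Local Open Scope ring_scope.

Lemma signsP (u : int) : u \in signs -> u = 1 \/ u = -1.
Proof. by rewrite !inE => /orP[] /eqP->; [left | right]. Qed.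

Lemma signsN (u : int) : u \in signs -> - u \in signs.
Proof. by case/signsP=> ->. Qed.

Lemma dvdz_sub_trans (n x y z : int) :
  (n %| x - z)%Z -> (n %| y - z)%Z -> (n %| x - y)%Z.
Proof. by rewrite -!eqz_mod_dvd => /eqP-> /eqP->. Qed.

Lemma dvdz_eqN (d x y : int) : y = x \/ y = - x -> (d %| x)%Z = (d %| y)%Z.
Proof. by case=> ->; rewrite ?rpredN. Qed.

Lemma dvdz_norm_lt (n x : int) : (n %| x)%Z -> `|x| < n -> x = 0.
Proof.
case/dvdzP=> k -> lt; have : k <= -1 \/ k = 0 \/ 1 <= k by lia.
by case=> [? | [-> | ?]]; nia.
Qed.

Lemma eq_of_dvdz_sub (n x y : int) : (n %| x - y)%Z -> `|x - y| < n -> x = y.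
Proof. by move=> dv /(dvdz_norm_lt dv) /eqP; rewrite subr_eq0 => /eqP. Qed.

Lemma eq_of_dvdz_lt (n x y : nat) :
  (x < n)%N -> (y < n)%N -> (n%:Z %| x%:Z - y%:Z)%Z -> x = y.
Proof. by move=> x_lt y_lt /eq_of_dvdz_sub; lia. Qed.

Lemma modn_dvdz (n l r : nat) : (r < n)%N -> (n%:Z %| l%:Z - r%:Z)%Z -> (l %% n)%N = r.
Proof.
move=> r_lt; rewrite -eqz_mod_dvd => /eqP.
by rewrite !modz_nat (modn_small r_lt) => -[].
Qed.

Lemma dvdz_window_rep (n lo x : int) :
  0 < n -> exists2 y, lo < y <= lo + n & (n %| y - x)%Z.
Proof.
move=> n_gt0; have := divz_eq (x - lo - 1) n.
have := modz_ge0 (x - lo - 1) (lt0r_neq0 n_gt0); have := ltz_pmod (x - lo - 1) n_gt0.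
move: (_ %/ n)%Z (_ %% n)%Z => q r r_lt r_ge e.
exists (lo + 1 + r); first lia.
by apply/dvdzP; exists (- q); lia.
Qed.

Lemma fold_eq (m : nat) (a a' s : int) :
  0 <= a <= m%:Z -> 0 <= a' <= m%:Z -> s \in signs -> ((2 * m)%:Z %| a - s * a')%Z -> a = a'.
Proof.
move=> a_in a'_in /signsP s_pm /dvdzP[k e].
have [k_neg | [k0 | [k1 | k_ge2]]] : k <= -1 \/ k = 0 \/ k = 1 \/ 2 <= k by lia.
all: case: s_pm e => -> e; nia.
Qed.

Lemma dvdz_chinese (d1 d2 x1 x2 : int) :
  (gcdz d1 d2 %| x1 - x2)%Z -> exists z, (d1 %| z - x1)%Z /\ (d2 %| z - x2)%Z.
Proof.
case/dvdzP=> t e; have [u [v uv]] := Bezoutz d1 d2.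
exists (x1 - t * u * d1); split; apply/dvdzP; first by exists (- (t * u)); lia.
by exists (t * v); rewrite -uv in e; lia.
Qed.

Lemma dvdz_chinese_lt (d1 d2 : nat) (x1 x2 : int) : (0 < d1)%N -> (0 < d2)%N ->
  (gcdn d1 d2 %| x1 - x2)%Z ->
  exists2 l : nat, (l < lcmn d1 d2)%N & (d1 %| l%:Z - x1)%Z /\ (d2 %| l%:Z - x2)%Z.
Proof.
move=> d1_gt0 d2_gt0 /(@dvdz_chinese d1 d2)[z [dv1 dv2]].
have lcm_gt0 : 0 < (lcmn d1 d2)%:Z by rewrite ltz_nat lcmn_gt0 d1_gt0.
have := divz_eq z (lcmn d1 d2); have := modz_ge0 z (lt0r_neq0 lcm_gt0).
have := ltz_pmod z lcm_gt0.
move: (_ %/ _)%Z (_ %% _)%Z => q r r_lt r_ge ez.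
have [l el] : exists l : nat, r = l%:Z by exists `|r|%N; lia.
subst r.
have lcm_dvd : (lcmn d1 d2 %| l%:Z - z)%Z by apply/dvdzP; exists (- q); lia.
move: lcm_dvd; rewrite dvdz_lcm => /andP[dvl1 dvl2].
exists l; first lia.
by rewrite -[_ - x1](subrKA z) -[_ - x2](subrKA z); split; apply: rpredD.
Qed.

Lemma lcmn_mul4 (m1 m2 : nat) : lcmn (4 * m1) (4 * m2) = (4 * m1 * m2 %/ gcdn m1 m2)%N.
Proof. by rewrite -muln_lcmr /lcmn muln_divA ?mulnA // dvdn_mulr // dvdn_gcdl. Qed.

Section TwoModuli.
Variables m1 m2 : nat.

Local Notation g := (gcdn m1 m2).
Local Notation L := (4 * m1 * m2 %/ gcdn m1 m2)%N.

Lemma gcd_dvdz_l (x : int) : ((4 * m1)%:Z %| x)%Z -> ((4 * g)%:Z %| x)%Z.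
Proof. by apply: dvdz_trans; rewrite dvdzE dvdn_pmul2l ?dvdn_gcdl. Qed.

Lemma gcd_dvdz_r (x : int) : ((4 * m2)%:Z %| x)%Z -> ((4 * g)%:Z %| x)%Z.
Proof. by apply: dvdz_trans; rewrite dvdzE dvdn_pmul2l ?dvdn_gcdr. Qed.

Lemma residue_pair_uniq (l l' rho rho' : nat) :
  (l < L)%N -> (l' < L)%N -> (rho < 2 * g)%N -> (rho' < 2 * g)%N ->
  ((4 * m1)%:Z %| l%:Z - l'%:Z)%Z ->
  ((4 * m2)%:Z %| (l%:Z - 2 * rho%:Z) - (l'%:Z - 2 * rho'%:Z))%Z ->
  l = l' /\ rho = rho'.
Proof.
move=> l_lt l'_lt rho_lt rho'_lt dv1 dv2.
have dv_rho : ((2 * g)%:Z %| rho%:Z - rho'%:Z)%Z.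
  have : ((4 * g)%:Z %| 2 * (rho%:Z - rho'%:Z))%Z.
    rewrite (_ : 2 * _ = (l%:Z - l'%:Z)
                         - ((l%:Z - 2 * rho%:Z) - (l'%:Z - 2 * rho'%:Z))); last by lia.
    by apply: rpredB; [apply: gcd_dvdz_l | apply: gcd_dvdz_r].
  by rewrite (_ : (4 * g)%:Z = 2 * (2 * g)%:Z) ?dvdz_mul2l //; lia.
have rho_eq := eq_of_dvdz_lt rho_lt rho'_lt dv_rho.
subst rho'; split=> //.
have dv_L : (L%:Z %| l%:Z - l'%:Z)%Z.
  by rewrite -lcmn_mul4 dvdz_lcm dv1 /=; move: dv2; rewrite (_ : _ - _ = l%:Z - l'%:Z) //; lia.
exact: eq_of_dvdz_lt l_lt l'_lt dv_L.
Qed.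

Hypotheses (m1_gt0 : (0 < m1)%N) (m2_gt0 : (0 < m2)%N).

Lemma residue_pair_exists (t1 t2 : int) : (2 %| t1 - t2)%Z ->
  exists l rho : nat, [/\ (l < L)%N, (rho < 2 * g)%N,
    ((4 * m1)%:Z %| l%:Z - t1)%Z & ((4 * m2)%:Z %| l%:Z - 2 * rho%:Z - t2)%Z].
Proof.
case/dvdzP=> E eE; have g_gt0 : (0 < g)%N by rewrite gcdn_gt0 m1_gt0.
have g2_gt0 : 0 < (2 * g)%:Z by rewrite ltz_nat muln_gt0.
have := divz_eq E (2 * g)%:Z; have := modz_ge0 E (lt0r_neq0 g2_gt0).
have := ltz_pmod E g2_gt0.
move: (_ %/ _)%Z (_ %% _)%Z => q r r_lt r_ge er.
have [rho erho] : exists rho : nat, r = rho%:Z by exists `|r|%N; lia.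
subst r; have m1_4 : (0 < 4 * m1)%N by rewrite muln_gt0.
have m2_4 : (0 < 4 * m2)%N by rewrite muln_gt0.
have dv_g : (gcdn (4 * m1) (4 * m2) %| t1 - (2 * rho%:Z + t2))%Z.
  by rewrite -muln_gcdr; apply/dvdzP; exists q; lia.
have [l l_lt [dv1 dv2]] := dvdz_chinese_lt m1_4 m2_4 dv_g.
exists l, rho; split; first by rewrite -lcmn_mul4.
- lia.
- exact: dv1.
- by rewrite -addrA -opprD.
Qed.

End TwoModuli.

Lemma corrP m1 m2 l rho i :
  reflect (inI m1 m2 i /\ exists2 u, u \in signs & exists2 v, v \in signs & cong m1 m2 l rho i u v)
          (corr m1 m2 l rho i).
Proof.
apply: (iffP andP) => -[inI_i].
  by case/hasP=> u u_s /hasP[v v_s c]; split=> //; exists u => //; exists v.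
by case=> u u_s [v v_s c]; split=> //; apply/hasP; exists u => //; apply/hasP; exists v.
Qed.

Section NodalIndexMap.
Variables m1 m2 : nat.
Implicit Types (l rho : nat) (a b u v : int).

Local Notation L := (4 * m1 * m2 %/ gcdn m1 m2)%N.

(* Solved for [l]: multiplying the first congruence by [v u] turns it into
   [l = v u i1 + (1 - v) m1], since [u^2 = v^2 = 1] and [v (1 - v) = v - 1]. *)
Lemma congE l rho a b u v : u \in signs -> v \in signs ->
  cong m1 m2 l rho (a, b) u v =
  ((4 * m1)%:Z %| l%:Z - (v * u * a + (1 - v) * m1%:Z))%Z &&
  ((4 * m2)%:Z %| l%:Z - 2 * rho%:Z - (b + (1 - v) * m2%:Z))%Z.
Proof.
move=> /signsP u_pm /signsP v_pm; rewrite /cong !eqz_mod_dvd /=.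
by case: u_pm v_pm => -> [] ->; congr andb; apply: dvdz_eqN; lia.
Qed.

Lemma cong_parity l rho a b u v : u \in signs -> v \in signs ->
  cong m1 m2 l rho (a, b) u v -> (2 %| a - l%:Z)%Z /\ (2 %| b - l%:Z)%Z.
Proof.
move=> u_s v_s; rewrite congE // => /andP[/dvdzP[k1 e1] /dvdzP[k2 e2]].
by case/signsP: u_s e1 => -> e1; case/signsP: v_s e1 e2 => -> e1 e2; lia.
Qed.

Lemma cong_fold l rho a b u v : u \in signs -> v \in signs ->
  cong m1 m2 l rho (a, b) u v -> ((2 * m1)%:Z %| a - v * u * l%:Z)%Z.
Proof.
move=> u_s v_s; rewrite congE // => /andP[/dvdzP[k e] _]; apply/dvdzP.
case/signsP: u_s e => -> e; case/signsP: v_s e => -> e;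
  [exists (-2 * k) | exists (2 * k + 1) | exists (2 * k) | exists (-2 * k - 1)]; lia.
Qed.

Lemma cong_first_diff l rho a b a' b' u v u' v' :
  u \in signs -> v \in signs -> u' \in signs -> v' \in signs ->
  cong m1 m2 l rho (a, b) u v -> cong m1 m2 l rho (a', b') u' v' ->
  ((4 * m1)%:Z %| v * u * a - v' * u' * a' - (v - v') * m1%:Z)%Z.
Proof.
move=> u_s v_s u'_s v'_s; rewrite !congE // => /andP[dv _] /andP[dv' _].
rewrite (_ : _ - _ = (l%:Z - (v' * u' * a' + (1 - v') * m1%:Z))
                      - (l%:Z - (v * u * a + (1 - v) * m1%:Z))); last by lia.
exact: rpredB.
Qed.

Lemma cong_second_diff l rho a b a' b' u v u' v' :
  u \in signs -> v \in signs -> u' \in signs -> v' \in signs ->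
  cong m1 m2 l rho (a, b) u v -> cong m1 m2 l rho (a', b') u' v' ->
  ((4 * m2)%:Z %| b - b' - (v - v') * m2%:Z)%Z.
Proof.
move=> u_s v_s u'_s v'_s; rewrite !congE // => /andP[_ dv] /andP[_ dv'].
rewrite (_ : _ - _ = (l%:Z - 2 * rho%:Z - (b' + (1 - v') * m2%:Z))
                      - (l%:Z - 2 * rho%:Z - (b + (1 - v) * m2%:Z))); last by lia.
exact: rpredB.
Qed.

Lemma cong_first_uniq l rho a b a' b' u v u' v' :
  u \in signs -> v \in signs -> u' \in signs -> v' \in signs ->
  0 <= a <= m1%:Z -> 0 <= a' <= m1%:Z ->
  cong m1 m2 l rho (a, b) u v -> cong m1 m2 l rho (a', b') u' v' -> a = a'.
Proof.
move=> u_s v_s u'_s v'_s a_in a'_in c c'.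
have s_s : v * u * (v' * u') \in signs.
  by case/signsP: u_s => ->; case/signsP: v_s => ->;
    case/signsP: u'_s => ->; case/signsP: v'_s => ->.
apply: (fold_eq a_in a'_in s_s).
rewrite (_ : _ - _ = (a - v * u * l%:Z) - v * u * (v' * u') * (a' - v' * u' * l%:Z)).
  by apply: rpredB; [exact: cong_fold c | apply: dvdz_mull; exact: cong_fold c'].
by case/signsP: u'_s => ->; case/signsP: v'_s => ->; lia.
Qed.

Lemma cong_flip_edge l rho b u v : u \in signs -> v \in signs ->
  cong m1 m2 l rho (m1%:Z, b) u v -> cong m1 m2 l rho (m1%:Z, b - 2 * m2%:Z) u (- v).
Proof.
move=> u_s v_s; rewrite !congE ?signsN // => /andP[/dvdzP[k1 e1] /dvdzP[k2 e2]].
apply/andP; split; apply/dvdzP.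
- by case/signsP: u_s e1 => -> e1; [exists k1 | exists (k1 - v)]; lia.
- by case/signsP: v_s e2 => -> e2; [exists k2 | exists (k2 + 1)]; lia.
Qed.

Lemma cong_inI01 l rho i u v : u \in signs -> v \in signs -> inI m1 m2 i ->
  cong m1 m2 l rho i u v -> inI0 m1 m2 i = ~~ odd l /\ inI1 m1 m2 i = odd l.
Proof.
case: i => a b u_s v_s inI_ab /(cong_parity u_s v_s)[par_a par_b].
have odd_l : odd l = ~~ (2 %| l%:Z)%Z by rewrite dvdzE /= dvdn2 negbK.
have even_a : (2 %| a)%Z = (2 %| l%:Z)%Z by apply/idP/idP; lia.
have even_b : (2 %| b)%Z = (2 %| l%:Z)%Z by apply/idP/idP; lia.
by rewrite /inI0 /inI1 inI_ab odd_l even_a even_b /=; case: (2 %| l%:Z)%Z.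
Qed.

Definition sol_set (i : int * int) u v : {set 'I_L * 'I_(2 * gcdn m1 m2)} :=
  [set p : 'I_L * 'I_(2 * gcdn m1 m2) | cong m1 m2 p.1 p.2 i u v].

Lemma sol_set_opp0 b u v : sol_set (0, b) (- u) v = sol_set (0, b) u v.
Proof. by apply/setP=> p; rewrite !inE /cong /= !eqz_mod_dvd mulNr !sub0r opprK rpredN. Qed.

Lemma fibre_sol_sets i : inI m1 m2 i ->
  [set p : 'I_L * 'I_(2 * gcdn m1 m2) | corr m1 m2 p.1 p.2 i] =
  (sol_set i 1 1 :|: sol_set i 1 (-1)) :|: (sol_set i (-1) 1 :|: sol_set i (-1) (-1)).
Proof. by move=> inI_i; apply/setP=> p; rewrite !inE /corr inI_i /= !orbF. Qed.

Hypotheses (m1_gt0 : (0 < m1)%N) (m2_gt0 : (0 < m2)%N).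

Lemma cong_first_edge l rho a b b' u v u' :
  u \in signs -> v \in signs -> u' \in signs -> 0 <= a <= m1%:Z ->
  cong m1 m2 l rho (a, b) u v -> cong m1 m2 l rho (a, b') u' (- v) -> a = m1%:Z.
Proof.
move=> u_s v_s u'_s a_in c c'.
move: (dvdz_norm_lt (cong_first_diff u_s v_s u'_s (signsN v_s) c c')).
by case/signsP: u_s => ->; case/signsP: v_s => ->; case/signsP: u'_s => ->; lia.
Qed.

Lemma cong_signs_uniq l rho a b u v u' v' :
  u \in signs -> v \in signs -> u' \in signs -> v' \in signs -> 0 <= a <= m1%:Z ->
  cong m1 m2 l rho (a, b) u v -> cong m1 m2 l rho (a, b) u' v' ->
  v = v' /\ (u = u' \/ a = 0).
Proof.
move=> u_s v_s u'_s v'_s a_in c c'.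
have v_eq : v = v'.
  move: (dvdz_norm_lt (cong_second_diff u_s v_s u'_s v'_s c c')).
  by case/signsP: v_s => ->; case/signsP: v'_s => ->; lia.
subst v'; split=> //; move: (dvdz_norm_lt (cong_first_diff u_s v_s u'_s v_s c c')).
by case/signsP: u_s => ->; case/signsP: v_s => ->; case/signsP: u'_s => ->; lia.
Qed.

Lemma first_coord_exists (x : int) : exists a u v,
  [/\ 0 <= a <= m1%:Z, u \in signs, v \in signs
    & ((4 * m1)%:Z %| x - (v * u * a + (1 - v) * m1%:Z))%Z].
Proof.
have n_gt0 : 0 < (4 * m1)%:Z by rewrite ltz_nat muln_gt0.
have := divz_eq x (4 * m1)%:Z; have := modz_ge0 x (lt0r_neq0 n_gt0).
have := ltz_pmod x n_gt0.
move: (_ %/ _)%Z (_ %% _)%Z => q t t_lt t_ge ex.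
have s1 : (1 : int) \in signs by [].
have sN1 : (-1 : int) \in signs by [].
have [t_le1 | t_gt1] := lerP t m1%:Z.
  by exists t, 1, 1; split=> //; [lia | apply/dvdzP; exists q; lia].
have [t_le2 | t_gt2] := lerP t (2 * m1)%:Z.
  by exists (2 * m1%:Z - t), 1, (-1); split=> //; [lia | apply/dvdzP; exists q; lia].
have [t_le3 | t_gt3] := lerP t (3 * m1)%:Z.
  by exists (t - 2 * m1%:Z), (-1), (-1); split=> //; [lia | apply/dvdzP; exists q; lia].
by exists (4 * m1%:Z - t), (-1), 1; split=> //; [lia | apply/dvdzP; exists (q + 1); lia].
Qed.

(* The second coordinate is read off modulo [4 m2] in the window [(-2 m2, 2 m2]];
   if that clashes with the constraint [i2 <= 0] on the edge [i1 = m1], switching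
   the sign [v] moves [i2] down by [2 m2]. *)
Lemma cong_exists l rho : exists i u v,
  [/\ inI m1 m2 i, u \in signs, v \in signs & cong m1 m2 l rho i u v].
Proof.
have [a [u [v [a_in u_s v_s dv1]]]] := first_coord_exists l%:Z.
have n_gt0 : 0 < (4 * m2)%:Z by rewrite ltz_nat muln_gt0.
have [b b_in dv2] := dvdz_window_rep (- (2 * m2%:Z))
  (l%:Z - 2 * rho%:Z - (1 - v) * m2%:Z) n_gt0.
have c : cong m1 m2 l rho (a, b) u v.
  rewrite congE // dv1 /=; case/dvdzP: dv2 => k e.
  by apply/dvdzP; exists (- k); lia.
have [par_a par_b] := cong_parity u_s v_s c.
have [/andP[/eqP a_edge b_gt0] | no_clash] := boolP ((a == m1%:Z) && (0 < b)).
  exists (m1%:Z, b - 2 * m2%:Z), u, (- v); rewrite signsN //; split=> //.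
  - by rewrite /inI /=; lia.
  - by apply: cong_flip_edge => //; rewrite -a_edge.
by exists (a, b), u, v; split=> //; rewrite /inI /=; lia.
Qed.

Lemma cong_inI_uniq l rho a b a' b' u v u' v' :
  u \in signs -> v \in signs -> u' \in signs -> v' \in signs ->
  inI m1 m2 (a, b) -> inI m1 m2 (a', b') ->
  cong m1 m2 l rho (a, b) u v -> cong m1 m2 l rho (a', b') u' v' -> (a, b) = (a', b').
Proof.
move=> u_s v_s u'_s v'_s inI_ab inI_ab' c c'.
have a_eq : a = a'.
  by apply: cong_first_uniq u_s v_s u'_s v'_s _ _ c c'; move: inI_ab inI_ab'; rewrite /inI /=; lia.
subst a'; congr pair.
have [v'_eq | v'_opp] : v' = v \/ v' = - v.
  by case/signsP: v_s => ->; case/signsP: v'_s => ->; [left | right | right | left].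
- subst v'; apply: (@eq_of_dvdz_sub (4 * m2)%:Z).
    by move: (cong_second_diff u_s v_s u'_s v_s c c'); rewrite subrr mul0r subr0.
  by move: inI_ab inI_ab'; rewrite /inI /=; lia.
- subst v'; have a_edge : a = m1%:Z.
    by apply: cong_first_edge u_s v_s u'_s _ c c'; move: inI_ab; rewrite /inI /=; lia.
  move: (dvdz_norm_lt (cong_second_diff u_s v_s u'_s (signsN v_s) c c')).
  by move: inI_ab inI_ab'; rewrite /inI /= a_edge; case/signsP: v_s => ->; lia.
Qed.

Lemma cong_lrho_exists a b u v : u \in signs -> v \in signs -> inI m1 m2 (a, b) ->
  exists l rho, [/\ (l < L)%N, (rho < 2 * gcdn m1 m2)%N & cong m1 m2 l rho (a, b) u v].
Proof.
move=> u_s v_s inI_ab.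
have [|l [rho [l_lt rho_lt dv1 dv2]]] :=
  residue_pair_exists m1_gt0 m2_gt0 (t1 := v * u * a + (1 - v) * m1%:Z) (t2 := b + (1 - v) * m2%:Z).
  by move: inI_ab; rewrite /inI /=; case/signsP: u_s => ->; case/signsP: v_s => ->; lia.
by exists l, rho; rewrite congE // dv1 dv2.
Qed.

Lemma cong_lrho_uniq l l' rho rho' a b u v : u \in signs -> v \in signs ->
  (l < L)%N -> (l' < L)%N -> (rho < 2 * gcdn m1 m2)%N -> (rho' < 2 * gcdn m1 m2)%N ->
  cong m1 m2 l rho (a, b) u v -> cong m1 m2 l' rho' (a, b) u v -> l = l' /\ rho = rho'.
Proof.
move=> u_s v_s l_lt l'_lt rho_lt rho'_lt.
rewrite !congE // => /andP[dv1 dv2] /andP[dv1' dv2'].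
apply: (residue_pair_uniq l_lt l'_lt rho_lt rho'_lt).
- exact: dvdz_sub_trans dv1 dv1'.
- exact: dvdz_sub_trans dv2 dv2'.
Qed.

Lemma cong_signs_uconv l rho a b u v u' v' :
  u \in signs -> v \in signs -> u' \in signs -> v' \in signs -> 0 <= a <= m1%:Z ->
  cong m1 m2 l rho (a, b) u v -> uconv m1 l u ->
  cong m1 m2 l rho (a, b) u' v' -> uconv m1 l u' -> u = u' /\ v = v'.
Proof.
move=> u_s v_s u'_s v'_s a_in c [u_0 u_2] c' [u'_0 u'_2].
have [<- [// | a0]] := cong_signs_uniq u_s v_s u'_s v'_s a_in c c'; split=> //.
have dv : ((4 * m1)%:Z %| l%:Z - (1 - v) * m1%:Z)%Z.
  by move: c; rewrite congE // a0 mulr0 add0r => /andP[].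
have m1_4 : (0 < 4 * m1)%N by rewrite muln_gt0.
have [v1 | vN1] := signsP v_s.
- have l_0 : (l %% (4 * m1) == 0)%N.
    by apply/eqP/(@modn_dvdz _ _ 0) => //; move: dv; rewrite v1 subrr mul0r.
  by rewrite (u_0 l_0) (u'_0 l_0).
- have l_2 : (l %% (4 * m1) == 2 * m1)%N.
    apply/eqP/modn_dvdz; first by rewrite ltn_pmul2r // .
    by move: dv; rewrite vN1 (_ : (1 - -1) * m1%:Z = (2 * m1)%:Z) //; lia.
  by rewrite (u_2 l_2) (u'_2 l_2).
Qed.

Lemma sol_set1 a b u v : u \in signs -> v \in signs -> inI m1 m2 (a, b) ->
  exists p, sol_set (a, b) u v = [set p].
Proof.
move=> u_s v_s inI_ab; have [l [rho [l_lt rho_lt c]]] := cong_lrho_exists u_s v_s inI_ab.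
exists (Ordinal l_lt, Ordinal rho_lt); apply/setP=> -[x y]; rewrite !inE.
apply/idP/eqP=> [c' | [-> ->] //].
have [ex ey] := cong_lrho_uniq u_s v_s (ltn_ord x) l_lt (ltn_ord y) rho_lt c' c.
by congr pair; apply: val_inj; [exact: ex | exact: ey].
Qed.

Lemma card_fibre a b : inI m1 m2 (a, b) ->
  #|[set p : 'I_L * 'I_(2 * gcdn m1 m2) | corr m1 m2 p.1 p.2 (a, b)]|
    = (if a == 0 then 2 else 4)%N.
Proof.
move=> inI_ab; have a_in : 0 <= a <= m1%:Z by move: inI_ab; rewrite /inI /=; lia.
have s1 : (1 : int) \in signs by []; have sN1 : (-1 : int) \in signs by [].
have same_point u v u' v' p p' : u \in signs -> v \in signs -> u' \in signs -> v' \in signs ->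
    sol_set (a, b) u v = [set p] -> sol_set (a, b) u' v' = [set p'] ->
    p = p' -> v = v' /\ (u = u' \/ a = 0).
  move=> u_s v_s u'_s v'_s e e' pp'.
  have : p \in sol_set (a, b) u v by rewrite e set11.
  have : p \in sol_set (a, b) u' v' by rewrite e' pp' set11.
  rewrite !inE => c' c; exact: cong_signs_uniq u_s v_s u'_s v'_s a_in c c'.
have [p11 e11] := sol_set1 s1 s1 inI_ab; have [p1N e1N] := sol_set1 s1 sN1 inI_ab.
have [pN1 eN1] := sol_set1 sN1 s1 inI_ab; have [pNN eNN] := sol_set1 sN1 sN1 inI_ab.
rewrite fibre_sol_sets //; case: eqP => [a0 | a_neq0].
  subst a; rewrite !sol_set_opp0 setUid e11 e1N cards2.
  by case: eqP => // /(same_point _ _ _ _ _ _ s1 s1 s1 sN1 e11 e1N)[].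
have distinct_points u v u' v' p p' :
    sol_set (a, b) u v = [set p] -> sol_set (a, b) u' v' = [set p'] ->
    u \in signs -> v \in signs -> u' \in signs -> v' \in signs ->
    (u != u') || (v != v') -> (p == p') = false.
  move=> e e' u_s v_s u'_s v'_s uv_neq.
  apply/eqP=> /(same_point _ _ _ _ _ _ u_s v_s u'_s v'_s e e').
  by case=> v_eq [u_eq | //]; rewrite u_eq v_eq !eqxx in uv_neq.
rewrite e11 e1N eN1 eNN -setUA !cardsU1 cards1 !inE.
by rewrite (distinct_points _ _ _ _ _ _ e11 e1N) // (distinct_points _ _ _ _ _ _ e11 eN1) //
  (distinct_points _ _ _ _ _ _ e11 eNN) // (distinct_points _ _ _ _ _ _ e1N eN1) //
  (distinct_points _ _ _ _ _ _ e1N eNN) // (distinct_points _ _ _ _ _ _ eN1 eNN).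
Qed.

End NodalIndexMap.

Theorem proposition9p1 (m1 m2 : nat) (hm1 : (0 < m1)%N) (hm2 : (0 < m2)%N) :
  let g := gcdn m1 m2 in
  let L := (4 * m1 * m2 %/ g)%N in
  [/\ (forall l rho : nat, (l < L)%N -> (rho < 2 * g)%N ->
         exists i : int * int, exists u : int, exists v : int,
           [/\ inI m1 m2 i, u \in signs, v \in signs & cong m1 m2 l rho i u v]),
      (forall (l rho : nat) (i i' : int * int), (l < L)%N -> (rho < 2 * g)%N ->
         corr m1 m2 l rho i -> corr m1 m2 l rho i' -> i = i'),
      (forall i : int * int, inI m1 m2 i ->
         exists l : nat, exists rho : nat,
           [/\ (l < L)%N, (rho < 2 * g)%N & corr m1 m2 l rho i]),
      (forall (l rho : nat) (i : int * int), (l < L)%N -> (rho < 2 * g)%N ->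
         corr m1 m2 l rho i ->
         (inI0 m1 m2 i = ~~ odd l) /\ (inI1 m1 m2 i = odd l)) &
    [/\
      (forall (l rho : nat) (i i' : int * int) (u v u' v' : int),
         (l < L)%N -> (rho < 2 * g)%N ->
         inI m1 m2 i -> u \in signs -> v \in signs -> cong m1 m2 l rho i u v ->
         uconv m1 l u ->
         inI m1 m2 i' -> u' \in signs -> v' \in signs -> cong m1 m2 l rho i' u' v' ->
         uconv m1 l u' ->
         u = u' /\ v = v') &
      (forall i : int * int, inI m1 m2 i ->
         #|[set p : 'I_L * 'I_(2 * g) | corr m1 m2 p.1 p.2 i]|
           = (if i.1 == 0 then 2 else 4)%N)]].
Proof.
move=> g L; have s1 : (1 : int) \in signs by [].
split.
- by move=> l rho _ _; apply: cong_exists.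
- move=> l rho [a b] [a' b'] _ _ /corrP[inI_ab [u u_s [v v_s c]]].
  case/corrP=> inI_ab' [u' u'_s [v' v'_s c']].
  exact: cong_inI_uniq u_s v_s u'_s v'_s inI_ab inI_ab' c c'.
- move=> [a b] inI_ab; have [l [rho [l_lt rho_lt c]]] := cong_lrho_exists hm1 hm2 s1 s1 inI_ab.
  by exists l, rho; split=> //; apply/corrP; split=> //; exists 1 => //; exists 1.
- move=> l rho i _ _ /corrP[inI_i [u u_s [v v_s c]]].
  exact: cong_inI01 u_s v_s inI_i c.
split.
- move=> l rho [a b] [a' b'] u v u' v' _ _ inI_ab u_s v_s c u_conv inI_ab' u'_s v'_s c' u'_conv.
  case: (cong_inI_uniq hm1 hm2 u_s v_s u'_s v'_s inI_ab inI_ab' c c') => ea eb.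
  subst a' b'.
  have a_in : 0 <= a <= m1%:Z by move: inI_ab; rewrite /inI /=; lia.
  exact: (cong_signs_uconv hm1 hm2 u_s v_s u'_s v'_s a_in c u_conv c') u'_conv.
- by move=> [a b]; apply: card_fibre.
Qed.
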